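(* Let $Y$ be a rate-one Yule process with $Y(0)=1$. For every $\delta\in(0,1/2)$ there exist positive constants $C_1,C_2,M_0$ (depending on $\delta$) such that for all $M\ge M_0$, $$\mathbb{P}\big(e^{-s}Y(s)\le e^{-\delta s}\text{ for some }s\ge M\big)\le C_1e^{-C_2M}.$$
   Context: A rate-one Yule process is a pure-birth continuous-time Markov chain on $\{1,2,\dots\}$ jumping from $k$ to $k+1$ at rate $k$. *)

From HB Require Import structures.
From mathcomp Require Import all_boot all_order all_algebra.
From mathcomp Require Import all_classical all_reals all_analysis.
Set Implicit Arguments. Unset Strict Implicit. Unset Printing Implicit Defensive.
Import Order.TTheory GRing.Theory Num.Theory.
Local Open Scope classical_set_scope.
Local Open Scope ring_scope.

Definition mutually_independent {d} {T : measurableType d} {R : realType}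
    (P : probability T R) (X : nat -> T -> R) : Prop :=
  forall (s : seq nat) (B : nat -> set R),
    uniq s -> (forall i, measurable (B i)) ->
    P (\big[setI/setT]_(i <- s) (X i @^-1` B i)) =
    (\prod_(i <- s) P (X i @^-1` B i))%E.

Definition exp_distributed {d} {T : measurableType d} {R : realType}
    (P : probability T R) (X : T -> R) (lam : R) : Prop :=
  P [set w | 0 < X w] = 1%E /\
  forall t : R, 0 <= t -> P [set w | t < X w] = (expR (- lam * t))%:E.

Definition jump_time {T : Type} {R : realType} (H : nat -> T -> R) (n : nat)
    (w : T) : R := \sum_(i < n) H i w.

(* Pure-birth path started at 1: state k is held during [T_{k-1}, T_k),
   so Y(s) = #{ n : T_n <= s } (extended-valued, +oo on explosion). *)
Definition birth_path {T : Type} {R : realType} (H : nat -> T -> R) (s : R)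
    (w : T) : \bar R := counting [set n : nat | jump_time H n w <= s].

(* H is the sequence of holding times of a rate-one Yule process with Y(0)=1:
   holding time in state k (= H (k-1)) is Exp(k), all independent. *)
Definition yule_holding_times {d} {T : measurableType d} {R : realType}
    (P : probability T R) (H : nat -> {RV P >-> R}) : Prop :=
  mutually_independent P (fun i => H i) /\
  forall i : nat, exp_distributed P (H i) i.+1%:R.

From HB Require Import structures.
From mathcomp Require Import all_boot all_order all_algebra.
From mathcomp Require Import all_classical all_reals all_analysis.
From mathcomp Require Import ring lra measurable_realfun.
Set Implicit Arguments.
Unset Strict Implicit.
Unset Printing Implicit Defensive.
Import Order.TTheory GRing.Theory Num.Theory.
Local Open Scope classical_set_scope.
Local Open Scope ring_scope.

(* Write [Y] for the birth path and [T_k] for its [k]-th jump time, a sum of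
   independent exponential variables of rates [1, ..., k].  As [Y] is
   nondecreasing, the event is covered by the events
   [Y(M + j) <= exp((1 - delta)(M + j + 1))], [j : nat], and [Y(m) <= c]
   forces [T_(floor c) > m].  A Chernoff bound with [theta = delta / 2],
   using [E exp(theta X) <= 1 + theta / (i (1 - theta)^2)] for [X] of rate
   [i] and [H_k <= 1 + ln k], gives
     P(T_k > m) <= exp(- theta m + theta / (1 - theta)^2 (1 + ln k)),
   which for [k <= exp((1 - delta)(m + 1))] decays like [exp(- g m)] with
   [g = theta - theta (1 - delta) / (1 - theta)^2 > 0]; the sum over [j] is
   geometric.  Independence is only given on events, so the exponential
   moment is taken of a staircase lower bound of [exp(theta x)], a finite
   combination of indicators. *)

Section markov_indic.
Context d (T : measurableType d) (R : realType) (mu : {measure set T -> \bar R}).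

Lemma markov_sum_indic (I : finType) (a : I -> R) (E : I -> set T) (A : set T) (al : R) :
  (forall i, 0 <= a i) -> (forall i, measurable (E i)) -> measurable A -> 0 <= al ->
  (forall w, A w -> al <= \sum_i a i * \1_(E i) w) ->
  (al%:E * mu A <= \sum_i (a i)%:E * mu (E i))%E.
Proof.
move=> a0 mE mA al0 leA.
have mindic (B : set T) : measurable B ->
    measurable_fun [set: T] ((fun w => (\1_B w : R)%:E) : T -> \bar R).
  by move=> mB; apply/measurable_EFinP; exact: measurable_indic.
have int_indic (k : R) (B : set T) : 0 <= k -> measurable B ->
    (\int[mu]_(x in setT) (k%:E * (\1_B x)%:E) = k%:E * mu B)%E.
  move=> k0 mB; have indic_ge0 x : [set: T] x -> (0 <= (\1_B x : R)%:E)%E.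
    by move=> _; rewrite lee_fin.
  rewrite (ge0_integralZl_EFin _ _ indic_ge0 _ k0) ?integral_indic ?setIT//.
  exact: mindic.
rewrite -int_indic// (eq_bigr _ (fun i _ => esym (int_indic _ _ (a0 i) (mE i)))).
rewrite -ge0_integral_sum//; last 2 first.
- by move=> i; apply: emeasurable_funM => //; exact: mindic.
- by move=> i x _; rewrite -EFinM lee_fin mulr_ge0.
apply: ge0_le_integral => //.
- by move=> x _; rewrite -EFinM lee_fin mulr_ge0.
- by apply: emeasurable_funM => //; exact: mindic.
- by apply: emeasurable_sum => i; apply: emeasurable_funM => //; exact: mindic.
move=> x _; rewrite -EFinM (eq_bigr (fun i => (a i * \1_(E i) x)%:E)); last first.
  by move=> i _; rewrite EFinM.
rewrite sumEFin lee_fin indicE; case: (boolP (x \in A)) => [/set_mem xA|_].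
  by rewrite mulr1; exact: leA.
by rewrite mulr0 sumr_ge0// => i _; rewrite mulr_ge0.
Qed.

End markov_indic.

Lemma prod_sum_indicE (T : Type) (R : comNzRingType) (K N : nat) (c : 'I_K -> 'I_N -> R)
    (F : 'I_K -> 'I_N -> set T) (w : T) :
  \prod_(i < K) \sum_(n < N) c i n * \1_(F i n) w =
  \sum_(v : {ffun 'I_K -> 'I_N})
     (\prod_(i < K) c i (v i)) * \1_(\big[setI/setT]_(i < K) F i (v i)) w.
Proof.
rewrite bigA_distr_bigA; apply: eq_bigr => v _; rewrite big_split /=; congr (_ * _).
elim/big_rec2: _ => [|i r S _ ->]; first by rewrite indicE in_setT.
by rewrite indicI.
Qed.

Lemma measurable_lt_fun d (T : measurableType d) (R : realType) (f : T -> R) (a : R) :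
  measurable_fun setT f -> measurable [set w | a < f w].
Proof.
move=> mf; rewrite (_ : [set w | _] = setT `&` f @^-1` `]a, +oo[).
  by apply: mf => //; exact: measurable_itv.
by apply/seteqP; split => w /=; rewrite in_itv /= andbT // => -[].
Qed.

Section independence.
Context d (T : measurableType d) (R : realType) (P : probability T R).
Variables (X : nat -> T -> R) (mX : forall i, measurable_fun setT (X i)).
Hypothesis indepX : mutually_independent P X.

Lemma measurable_preimage i (B : set R) : measurable B -> measurable (X i @^-1` B).
Proof. by move=> mB; rewrite -[X in measurable X]setTI; exact: mX. Qed.

Lemma mutually_independent_bigcap K (B : 'I_K -> set R) :
  (forall i, measurable (B i)) ->
  P (\big[setI/setT]_(i < K) (X i @^-1` B i)) = (\prod_(i < K) P (X i @^-1` B i))%E.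
Proof.
move=> mB; pose B' j := oapp B setT (insub j).
have mB' j : measurable (B' j) by rewrite /B'; case: insub => /=.
have iotaK : iota 0 K = index_iota 0 K by rewrite /index_iota subn0.
have := @indepX (iota 0 K) B' (iota_uniq 0 K) mB'.
rewrite iotaK !big_mkord /B'.
by under eq_bigr do rewrite valK; under [in RHS]eq_bigr do rewrite valK.
Qed.

Lemma markov_prod_indep K N (c : 'I_K -> 'I_N -> R) (B : 'I_K -> 'I_N -> set R)
    (A : set T) (al : R) :
  (forall i n, 0 <= c i n) -> (forall i n, measurable (B i n)) -> measurable A -> 0 <= al ->
  (forall w, A w -> al <= \prod_(i < K) \sum_(n < N) c i n * \1_(B i n) (X i w)) ->
  (al%:E * P A <= (\prod_(i < K) \sum_(n < N) c i n * fine (P (X i @^-1` B i n)))%:E)%E.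
Proof.
move=> c0 mB mA al0 leA.
have mE (v : {ffun 'I_K -> 'I_N}) :
    measurable (\big[setI/setT]_(i < K) (X i @^-1` B i (v i))).
  by apply: bigsetI_measurable => i _; exact: measurable_preimage.
apply: le_trans (markov_sum_indic P (a := fun v : {ffun 'I_K -> 'I_N} => \prod_(i < K) c i (v i))
  _ mE mA al0 _) _.
- by move=> v; apply: prodr_ge0.
- move=> w /leA; congr (_ <= _); rewrite -(prod_sum_indicE c (fun i n => X i @^-1` B i n)).
  by apply: eq_bigr => i _; apply: eq_bigr => n _; rewrite !indicE.
have term (v : {ffun 'I_K -> 'I_N}) :
    ((\prod_(i < K) c i (v i))%:E * P (\big[setI/setT]_(i < K) (X i @^-1` B i (v i))) =
     (\prod_(i < K) (c i (v i) * fine (P (X i @^-1` B i (v i)))))%:E)%E.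
  have /= -> := mutually_independent_bigcap (B := fun i => B i (v i)) (fun i => mB i (v i)).
  rewrite big_split /= EFinM; congr (_ * _)%E; rewrite -prodEFin; apply: eq_bigr => i _.
  by rewrite fineK//; apply: fin_num_measure; exact: measurable_preimage.
by rewrite bigA_distr_bigA -sumEFin (eq_bigr _ (fun v _ => term v)).
Qed.

End independence.

Section exp_stair.
Context {R : realType}.
Implicit Types (th h lam m x y : R) (n N : nat).

Definition stair_step th h n : R :=
  if n == 0%N then 1 else expR (th * (n%:R * h)) - expR (th * (n.-1%:R * h)).

Definition stair_set h n : set R :=
  if n == 0%N then setT else `]n.-1%:R * h, +oo[%classic.

(* The sum telescopes: [exp_stair th h N x = expR (th * j * h)] where [j <= N]
   is the number of [n] in [1..N] with [(n - 1) h < x]. *)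
Definition exp_stair th h N x : R :=
  \sum_(n < N.+1) stair_step th h n * \1_(stair_set h n) x.

Lemma stair_step_ge0 th h n : 0 <= th -> 0 <= h -> 0 <= stair_step th h n.
Proof.
move=> th0 h0; rewrite /stair_step; case: ifP => // _.
by rewrite subr_ge0 ler_expR ler_wpM2l// ler_wpM2r// ler_nat leq_pred.
Qed.

Lemma measurable_stair_set h n : measurable (stair_set h n).
Proof. by rewrite /stair_set; case: ifP => _; [exact: measurableT|exact: measurable_itv]. Qed.

Lemma exp_stair_lb th h N x : 0 <= th -> 0 <= h ->
  1 <= exp_stair th h N x /\
  forall y, y <= x -> y <= N%:R * h -> expR (th * y) <= exp_stair th h N x.
Proof.
move=> th0 h0; elim: N => [|N [ge1 IH]].
  rewrite /exp_stair big_ord_recl big_ord0 addr0 /stair_step /stair_set /=.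
  rewrite indicE in_setT mulr1; split=> // y _; rewrite mul0r => y0.
  by rewrite -expR0 ler_expR mulr_ge0_le0.
rewrite /exp_stair big_ord_recr /= -/(exp_stair th h N x).
have step_ge0 : 0 <= stair_step th h N.+1 * \1_(stair_set h N.+1) x.
  by rewrite mulr_ge0 ?stair_step_ge0// indicE ler0n.
split=> [|y yx yN]; first by rewrite (le_trans ge1)// lerDl.
have [Nx|xN] := ltP (N%:R * h) x; last first.
  by rewrite (le_trans (IH y yx (le_trans yx xN)))// lerDl.
have := IH (N%:R * h) (ltW Nx) (lexx _).
have xN : x \in `]N%:R * h, +oo[%classic by rewrite mem_set//= in_itv/= Nx.
rewrite /stair_set /stair_step /= indicE xN mulr1 => lbN.
by rewrite (le_trans _ (lerD lbN (lexx _)))// addrC subrK ler_expR ler_wpM2l.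
Qed.

Lemma expR_clamp_le_exp_stair th h N m x : 0 <= th -> 0 <= h -> m <= N%:R * h ->
  expR (th * Num.max 0 (Num.min x m)) <= exp_stair th h N x.
Proof.
move=> th0 h0 mN; have [ge1 lb] := exp_stair_lb N x th0 h0.
have [_|_] := leP (Num.min x m) 0; first by rewrite mulr0 expR0.
by rewrite lb ?ge_min ?lexx// mN orbT.
Qed.

Lemma le_sum_clamp (I : finType) (x : I -> R) m : 0 <= m -> m <= \sum_i x i ->
  m <= \sum_i Num.max 0 (Num.min (x i) m).
Proof.
move=> m0 mx; have clamp_ge0 i : 0 <= Num.max 0 (Num.min (x i) m) by rewrite le_max lexx.
have [[i mxi]|] := pselect (exists i, m <= x i).
  rewrite (bigD1 i)//= (min_r mxi) (max_r m0) lerDl.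
  by rewrite sumr_ge0.
move=> /forallNP xm; apply: (le_trans mx); apply: ler_sum => i _.
have /negP := xm i; rewrite -ltNge => /ltW xim.
by rewrite (min_l xim) le_max lexx orbT.
Qed.

(* Each factor dominates [expR (th * x')], with [x'] the clamp of [x i] to
   [[0, m]], and these clamps still add up to at least [m]. *)
Lemma expR_le_prod_exp_stair (I : finType) th (h : I -> R) N m (x : I -> R) :
  0 <= th -> 0 <= m -> (forall i, 0 <= h i) -> (forall i, m <= N%:R * h i) ->
  m <= \sum_i x i -> expR (th * m) <= \prod_i exp_stair th (h i) N (x i).
Proof.
move=> th0 m0 h0 mN mx.
apply: (@le_trans _ _ (expR (th * \sum_i Num.max 0 (Num.min (x i) m)))).
  by rewrite ler_expR ler_wpM2l// le_sum_clamp.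
rewrite mulr_sumr expR_sum; apply: ler_prod => i _.
by rewrite expR_ge0 expR_clamp_le_exp_stair.
Qed.

Lemma exp_stair_meanE th h lam N :
  \sum_(n < N.+1) stair_step th h n * expR (- lam * (n.-1%:R * h)) =
  1 + (expR (th * h) - 1) * \sum_(k < N) expR ((th - lam) * h) ^+ k.
Proof.
rewrite big_ord_recl /stair_step /= mul0r mulr0 expR0 mulr1; congr (_ + _).
rewrite mulr_sumr; apply: eq_bigr => k _; rewrite /bump /= add1n /=.
rewrite -expRM_natl !mulrBl mul1r -!expRD add0n -natr1.
by congr (expR _ - expR _); ring.
Qed.

Lemma expR_mul_1B_le1 y : expR y * (1 - y) <= 1.
Proof. by rewrite -[leRHS](expRxMexpNx_1 y) ler_pM2l ?expR_gt0// expR_ge1Dx. Qed.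

Lemma expR_sub1_le y : 0 <= y -> (expR y - 1) * (1 - y) <= y.
Proof. by have := expR_mul_1B_le1 y; lra. Qed.

Lemma geometric_sum_mul_le (q : R) N : 0 <= q -> (\sum_(k < N) q ^+ k) * (1 - q) <= 1.
Proof.
move=> q0; rewrite -opprB mulrN mulrC -subrX1 opprB lerBlDr lerDl.
exact: exprn_ge0.
Qed.

Lemma exp_stair_mean_le th lam N : 0 < th < 1 -> 1 <= lam ->
  \sum_(n < N.+1) stair_step th (th / lam) n * expR (- lam * (n.-1%:R * (th / lam)))
    <= 1 + th / (lam * (1 - th) ^+ 2).
Proof.
move=> /andP[th0 th1] lam1; have lam0 : 0 < lam by lra.
rewrite exp_stair_meanE lerD2l; set h := th / lam; set y := th * h; set z := th - y.
have lamh : lam * h = th by rewrite /h mulrC divfK ?gt_eqF.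
have -> : (th - lam) * h = - z by rewrite mulrBl lamh opprB.
have ylam : y * lam = th ^+ 2 by rewrite /y -mulrA (mulrC h) lamh expr2.
have y0 : 0 <= y by rewrite mulr_ge0 ?divr_ge0 ?ltW.
have yth : y <= th ^+ 2 by nra.
have z_ge : th * (1 - th) <= z by rewrite /z; nra.
have z_le : z <= th by rewrite /z; lra.
have z0 : 0 < z by nra.
set e := expR y - 1; set q := expR (- z); set S := \sum_(k < N) q ^+ k.
have e0 : 0 <= e by rewrite subr_ge0 -expR0 ler_expR.
have q0 : 0 < q by exact: expR_gt0.
have S0 : 0 <= S by rewrite sumr_ge0// => k _; rewrite exprn_ge0// ltW.
have e_le : e * (1 - y) <= y by exact: expR_sub1_le.
have q_le : q * (1 + z) <= 1 by have := expR_mul_1B_le1 (- z); rewrite opprK.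
have S_le : S * (1 - q) <= 1 by exact/geometric_sum_mul_le/ltW.
have Sz : S * z <= 1 + z by nra.
have eth : e * (1 - th ^+ 2) <= y by nra.
have eSz : e * (1 - th ^+ 2) * (S * z) * lam <= th ^+ 2 * (1 + z).
  have eth0 : 0 <= e * (1 - th ^+ 2) by rewrite mulr_ge0// subr_ge0; nra.
  have Sz0 : 0 <= S * z by rewrite mulr_ge0// ltW.
  rewrite -[X in _ <= X * _]ylam (mulrAC y) ler_wpM2r ?(ltW lam0)//.
  exact: ler_pM.
have key : th * (1 - th) * (1 + z) <= (1 + th) * z by nra.
rewrite ler_pdivlMr ?mulr_gt0 ?exprn_gt0 ?subr_gt0//.
suff : e * S * (lam * (1 - th) ^+ 2) * ((1 + th) * z) <= th * ((1 + th) * z).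
  by rewrite ler_pM2r ?mulr_gt0//; lra.
have th1' : 0 <= 1 - th by lra.
by have := ler_wpM2l (ltW th0) key; have := ler_wpM2l th1' eSz; nra.
Qed.

End exp_stair.

Lemma prod_le_expR_sum {R : realType} (I : finType) (G b : I -> R) :
  (forall i, 0 <= G i <= 1 + b i) -> \prod_i G i <= expR (\sum_i b i).
Proof.
move=> Gb; rewrite expR_sum; apply: ler_prod => i _.
by have /andP[-> /le_trans] := Gb i; apply; exact: expR_ge1Dx.
Qed.

Lemma harmonic_sum_le {R : realType} K : (0 < K)%N ->
  \sum_(i < K) harmonic i <= 1 + ln (K%:R : R).
Proof.
case: K => // K _; rewrite -lerBlDl -ler_expR lnK ?posrE ?ltr0n//.
elim: K => [|K IH]; first by rewrite big_ord_recl big_ord0 /= invr1 addr0 subrr expR0.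
rewrite big_ord_recr /= addrAC expRD.
set u : R := K.+2%:R^-1.
have u0 : 0 < u by rewrite invr_gt0 ltr0n.
have u1 : 1 - u = K.+1%:R * u.
  by rewrite -{1}(@mulfV _ K.+2%:R) ?pnatr_eq0// -/u -natr1 mulrDl mul1r addrK.
have : expR u * (1 - u) <= K.+2%:R * u by rewrite mulfV ?pnatr_eq0 ?expR_mul_1B_le1.
rewrite u1 mulrA ler_pM2r// => eu.
by rewrite (le_trans _ eu)// mulrC ler_wpM2l ?expR_ge0.
Qed.

Section exponential_sum_tail.
Context d (T : measurableType d) (R : realType) (P : probability T R).
Variables (X : nat -> T -> R) (mX : forall i, measurable_fun setT (X i)).
Hypothesis indepX : mutually_independent P X.
Hypothesis X_tail : forall i (t : R), 0 <= t ->
  P [set w | t < X i w] = (expR (- i.+1%:R * t))%:E.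

Lemma exponential_sum_tail (th m : R) K : 0 < th < 1 -> 0 <= m ->
  (P [set w | (m < \sum_(i < K) X i w)%R] <=
   (expR (- (th * m)) * expR (th / (1 - th) ^+ 2 * \sum_(i < K) harmonic i))%:E)%E.
Proof.
move=> /andP[th0 th1] m0; set a := th / (1 - th) ^+ 2.
set N := (Num.truncn (m * K%:R / th)).+1; pose h (i : 'I_K) := th / i.+1%:R.
have h0 i : 0 <= h i by rewrite divr_ge0 ?ltW.
have Nh i : m <= N%:R * h i.
  rewrite /h mulrA ler_pdivlMr// (le_trans (ler_wpM2l m0 (_ : i.+1%:R <= K%:R)))//.
    by rewrite ler_nat.
  by rewrite -ler_pdivrMr// ltW// truncnS_gt.
set A := [set w | m < \sum_(i < K) X i w].
have mA : measurable A.
  by apply: measurable_lt_fun; apply: measurable_sum => i; exact: mX.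
have := markov_prod_indep mX indepX (c := fun i n => stair_step th (h i) n)
  (B := fun i n => stair_set (h i) n) (A := A) (al := expR (th * m))
  (fun i (n : 'I_N.+1) => stair_step_ge0 n (ltW th0) (h0 i))
  (fun i (n : 'I_N.+1) => measurable_stair_set (h i) n)
  mA (expR_ge0 _) (fun w Aw => expR_le_prod_exp_stair (ltW th0) m0 h0 Nh (ltW Aw)).
have tailE (i : 'I_K) (n : nat) : fine (P (X i @^-1` stair_set (h i) n)) =
    expR (- i.+1%:R * (n.-1%:R * h i)).
  rewrite /stair_set; case: ifP => [/eqP->|_].
    by rewrite preimage_setT probability_setT mul0r mulr0 expR0.
  rewrite (_ : _ @^-1` _ = [set w | n.-1%:R * h i < X i w]).
    by rewrite X_tail// mulr_ge0.
  by apply/seteqP; split => w /=; rewrite in_itv /= andbT.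
under eq_bigr do under eq_bigr do rewrite tailE.
have mean_le : \prod_(i < K) \sum_(n < N.+1)
    stair_step th (h i) n * expR (- i.+1%:R * (n.-1%:R * h i)) <=
    expR (a * \sum_(i < K) harmonic i).
  rewrite mulr_sumr; apply: prod_le_expR_sum => i; apply/andP; split.
    by apply: sumr_ge0 => n _; rewrite mulr_ge0 ?expR_ge0 ?stair_step_ge0// ltW.
  have := @exp_stair_mean_le _ th i.+1%:R N; rewrite th0 th1 ler1n => /(_ isT isT).
  by rewrite /= /a invfM mulrA mulrAC.
rewrite -[P A]fineK ?fin_num_measure// -EFinM !lee_fin => PA.
rewrite -(ler_pM2l (expR_gt0 (th * m))) mulrA expRxMexpNx_1 mul1r.
exact: le_trans PA mean_le.
Qed.

End exponential_sum_tail.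

Section birth_path.
Context d (T : measurableType d) (R : realType).
Variable X : nat -> T -> R.
Implicit Types (a b : R) (w : T).

Lemma birth_pathE a w : birth_path X a w =
  (\sum_(n <oo) (\1_[set w | jump_time X n w <= a] w : R)%:E)%E.
Proof.
rewrite /birth_path counting_dirac; apply: eq_eseriesr => n _.
by rewrite diracE indicE.
Qed.

Lemma le_birth_path a b w : a <= b -> (birth_path X a w <= birth_path X b w)%E.
Proof.
move=> ab; rewrite !birth_pathE; apply: lee_nneseries => [n _ _|n _].
  by rewrite lee_fin indicE ler0n.
rewrite lee_fin !indicE; case: (boolP (w \in _)) => [/set_mem /= Tn|_]; last exact: ler0n.
by rewrite mem_set//= (le_trans Tn ab).
Qed.

Lemma birth_path_ge a w k : (forall n, (n <= k)%N -> jump_time X n w <= a) ->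
  ((k.+1%:R)%:E <= birth_path X a w)%E.
Proof.
move=> Ta; rewrite birth_pathE.
apply: le_trans (nneseries_lim_ge k.+1 _); last by move=> n _ _; rewrite lee_fin indicE ler0n.
rewrite sumEFin lee_fin big_mkord (eq_bigr (fun _ => 1)) ?sumr_const ?card_ord// => i _.
by rewrite indicE mem_set//= Ta// -ltnS.
Qed.

Lemma le_jump_time w n k : (forall i, (i < k)%N -> 0 <= X i w) -> (n <= k)%N ->
  jump_time X n w <= jump_time X k w.
Proof.
move=> X0 nk; rewrite /jump_time -!(big_mkord xpredT (fun i => X i w)).
rewrite (big_cat_nat (leq0n n) nk) /=.
by rewrite lerDl big_nat_cond sumr_ge0// => i /andP[/andP[_ /X0]].
Qed.

Lemma lt_jump_time_truncn a w (c : R) : 0 <= c ->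
  (forall i, (i < Num.truncn c)%N -> 0 <= X i w) ->
  (birth_path X a w <= c%:E)%E -> a < jump_time X (Num.truncn c) w.
Proof.
move=> c0 X0 Yc; rewrite ltNge; apply/negP => Tk.
have := le_trans (birth_path_ge (fun n nk => le_trans (le_jump_time X0 nk) Tk)) Yc.
by rewrite lee_fin leNgt truncnS_gt.
Qed.

Hypothesis mX : forall i, measurable_fun setT (X i).

Lemma measurable_jump_time n : measurable_fun setT (jump_time X n).
Proof. by apply: measurable_sum => i; exact: mX. Qed.

Lemma measurable_birth_path a : measurable_fun setT (birth_path X a).
Proof.
rewrite (_ : birth_path X a = fun w =>
    (\sum_(n <oo) (\1_[set w | jump_time X n w <= a] w : R)%:E)%E).
  2: by apply: funext => w; rewrite birth_pathE.
apply: (ge0_emeasurable_sum (P := xpredT)) => [k w _ _|k _].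
  by rewrite lee_fin indicE ler0n.
apply/measurable_EFinP; apply: measurable_indic.
rewrite (_ : [set w | _] = setT `&` jump_time X k @^-1` `]-oo, a]).
  by apply: measurable_jump_time => //; exact: measurable_itv.
by apply/seteqP; split => w /=; rewrite in_itv /= // => -[].
Qed.

Lemma measurable_birth_path_le a (c : R) :
  measurable [set w | (birth_path X a w <= c%:E)%E].
Proof.
rewrite -[X in measurable X]setTI.
by apply: emeasurable_fun_infty_c => //; exact: measurable_birth_path.
Qed.

End birth_path.

Section birth_path_prob.
Context d (T : measurableType d) (R : realType) (P : probability T R).
Variables (X : nat -> T -> R) (mX : forall i, measurable_fun setT (X i)).
Hypothesis X_pos : forall i, P [set w | 0 < X i w] = 1%E.

Lemma birth_path_le_prob a (c : R) : 0 <= c ->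
  (P [set w | (birth_path X a w <= c%:E)%E] <=
   P [set w | (a < jump_time X (Num.truncn c) w)%R])%E.
Proof.
move=> c0; pose bad := \bigcup_i ~` [set w | 0 < X i w].
have mpos i : measurable [set w | 0 < X i w] by exact: measurable_lt_fun.
have mbad : measurable bad by apply: bigcupT_measurable => i; exact: measurableC.
have Pbad : P bad = 0%E.
  apply/eqP; rewrite eq_le measure_ge0 andbT.
  apply: le_trans (measure_sigma_subadditive P (fun i => measurableC (mpos i)) mbad
    (@subset_refl _ bad)) _.
  rewrite eseries0// => i _ _; have := probability_setC P (mpos i).
  by rewrite X_pos subee// => h; exact: h.
have sub : [set w | (birth_path X a w <= c%:E)%E] `<=`
    [set w | a < jump_time X (Num.truncn c) w] `|` bad.
  move=> w /= Yc; have [Xw|/existsNP[i Xi]] := pselect (forall i, 0 < X i w).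
    by left; apply: lt_jump_time_truncn c0 _ Yc => i _; exact: ltW.
  by right; exists i.
have mjump := measurable_lt_fun a (measurable_jump_time mX (Num.truncn c)).
apply: le_trans (le_measure _ _ _ sub) _; rewrite ?inE.
- exact: measurable_birth_path_le.
- exact: measurableU.
apply: le_trans (measureU2 _ mjump mbad) _.
by rewrite [X in (_ + X)%E](_ : _ = 0%E) ?adde0//; exact: Pbad.
Qed.

End birth_path_prob.

Lemma expRN_mul_le_iff {R : realType} (dl s : R) (y : \bar R) :
  ((expR (- s))%:E * y <= (expR (- dl * s))%:E)%E = (y <= (expR ((1 - dl) * s))%:E)%E.
Proof.
have -> : expR (- dl * s) = expR (- s) * expR ((1 - dl) * s).
  by rewrite -expRD; congr expR; ring.
by rewrite EFinM lee_pmul2l ?lte_fin ?expR_gt0.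
Qed.

Section slow_growth.
Context d (T : measurableType d) (R : realType).
Variable X : nat -> T -> R.

Definition slow_growth_after (dl M : R) : set T :=
  [set w | exists s, M <= s /\ (birth_path X s w <= (expR ((1 - dl) * s))%:E)%E].

Lemma birth_path_fin_or_pinfty a w :
  (exists n : nat, birth_path X a w = (n%:R)%:E) \/ birth_path X a w = +oo%E.
Proof. by rewrite /birth_path /counting; case: ifPn => _; [left; eexists|right]. Qed.

(* Since [Y] is nondecreasing and integer valued, [Y(s) <= expR ((1 - dl) s)]
   for some [s >= M] iff [Y(a_k) <= k] for some [k], with [a_k] the first time
   [s >= M] at which [expR ((1 - dl) s) >= k]. *)
Lemma slow_growth_afterE dl M : dl < 1 -> 0 <= M ->
  slow_growth_after dl M = \bigcup_k [set w | (birth_path X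
    (Num.max M (ln (k%:R : R) / (1 - dl)))%R w <= (k%:R)%:E)%E].
Proof.
move=> dl1 M0; have dl1' : 0 < 1 - dl by rewrite subr_gt0.
set a := fun k : nat => Num.max M (ln (k%:R : R) / (1 - dl)).
have le_expR k s : (0 < k)%N -> (k%:R <= expR ((1 - dl) * s)) = (ln k%:R / (1 - dl) <= s).
  by move=> k0; rewrite ler_pdivrMr// mulrC -[in RHS]ler_expR lnK// posrE ltr0n.
apply/seteqP; split => w /=.
- move=> [s [Ms Ys]]; have [[n Yn]|Yoo] := birth_path_fin_or_pinfty s w; last first.
    by move: Ys; rewrite Yoo leye_eq.
  exists n => //; rewrite -Yn; apply: le_birth_path; rewrite ge_max Ms/=.
  have [->|n0] := posnP n; last by rewrite -le_expR// -lee_fin -Yn.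
  by rewrite ln0// mul0r (le_trans M0).
- move=> [k _ Yk]; exists (a k); split; first by rewrite le_max lexx.
  rewrite (le_trans Yk)// lee_fin; have [->|k0] := posnP k; first exact: expR_ge0.
  by rewrite le_expR// le_max lexx orbT.
Qed.

Lemma measurable_slow_growth_after (mX : forall i, measurable_fun setT (X i)) dl M :
  dl < 1 -> 0 <= M -> measurable (slow_growth_after dl M).
Proof.
move=> dl1 M0; rewrite slow_growth_afterE//.
by apply: bigcupT_measurable => k; exact: measurable_birth_path_le.
Qed.

Lemma slow_growth_after_sub dl M : dl < 1 ->
  slow_growth_after dl M `<=` \bigcup_j
    [set w | (birth_path X (M + j%:R)%R w <= (expR ((1 - dl) * (M + j%:R + 1)))%:E)%E].
Proof.
move=> dl1 w [s [Ms Ys]]; set j := Num.truncn (s - M).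
have /andP[js sj] : j%:R <= s - M < j.+1%:R by rewrite truncn_itv// subr_ge0.
exists j => //=; have Mjs : M + j%:R <= s by lra.
apply: le_trans (le_birth_path X w Mjs) (le_trans Ys _).
rewrite lee_fin ler_expR ler_wpM2l ?subr_ge0 ?ltW//; rewrite -natr1 in sj; lra.
Qed.

End slow_growth.

Lemma eseries_expR_le {R : realType} (C g M : R) : 0 <= C -> 0 < g ->
  (\sum_(j <oo) (C * expR (- g * (M + j%:R)))%:E <=
   (C / (1 - expR (- g)) * expR (- g * M))%:E)%E.
Proof.
move=> C0 g0; set r := expR (- g).
have r1 : `|r| < 1 by rewrite gtr0_norm ?expR_gt0// -expR0 ltr_expR oppr_lt0.
apply: lime_le; first by apply: is_cvg_nneseries => n _ _; rewrite lee_fin mulr_ge0 ?expR_ge0.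
apply: nearW => n; rewrite sumEFin lee_fin mulrAC.
rewrite (eq_bigr (geometric (C * expR (- g * M)) r)) => [|j _].
  exact: geometric_le_lim (mulr_ge0 C0 (expR_ge0 _)) (expR_gt0 _) r1.
by rewrite /= /r -expRM_natl -mulrA -expRD; congr (_ * expR _); ring.
Qed.

Section yule.
Context d (T : measurableType d) (R : realType) (P : probability T R).
Variable H : nat -> {RV P >-> R}.
Hypothesis yuleH : yule_holding_times H.

Let mH i : measurable_fun setT (H i). Proof. exact: measurable_funP. Qed.

Lemma yule_birth_path_le (th rho m : R) : 0 < th < 1 -> 0 <= rho -> 0 <= m ->
  (P [set w | (birth_path (fun i => H i) m w <= (expR (rho * (m + 1)))%:E)%E] <=
   (expR (th / (1 - th) ^+ 2 * (1 + rho)) *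
    expR (- (th - th / (1 - th) ^+ 2 * rho) * m))%:E)%E.
Proof.
move=> th01 rho0 m0; have [indepH expH] := yuleH.
set c := expR (rho * (m + 1)); set a := th / (1 - th) ^+ 2.
have c1 : 1 <= c by rewrite -expR0 ler_expR mulr_ge0// addr_ge0.
apply: le_trans (birth_path_le_prob mH (fun i => (expH i).1) m (expR_ge0 _)) _.
apply: le_trans (exponential_sum_tail mH indepH (fun i => (expH i).2) _ th01 m0) _.
have /andP[kc _] := truncn_itv (expR_ge0 (rho * (m + 1))); rewrite -/c in kc.
have k0 : (0 < Num.truncn c)%N by rewrite -ltnS -(ltr_nat R) (le_lt_trans c1) ?truncnS_gt.
have lnk : ln (Num.truncn c)%:R <= rho * (m + 1).
  by rewrite -[leRHS]expRK ler_ln ?posrE ?ltr0n ?expR_gt0.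
have a0 : 0 <= a by rewrite divr_ge0 ?exprn_ge0// ?subr_ge0 ltW//; case/andP: th01.
have Hk : \sum_(i < Num.truncn c) harmonic i <= 1 + rho * (m + 1) :> R.
  by rewrite (le_trans (harmonic_sum_le k0))// lerD2l.
have := ler_wpM2l a0 Hk.
by rewrite lee_fin -!expRD ler_expR -/a -/c; nra.
Qed.

End yule.

Theorem lemma5p12 (R : realType) (delta : R) :
  0 < delta < 1 / 2 ->
  exists C1 C2 M0 : R, [/\ 0 < C1, 0 < C2 & 0 < M0] /\
  forall (d : measure_display) (T : measurableType d) (P : probability T R)
         (H : nat -> {RV P >-> R}),
    yule_holding_times H ->
    forall M : R, M0 <= M ->
      (P [set w | exists s : R, (M <= s)%R /\
           ((expR (- s))%:E * birth_path (fun i => H i) s w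
              <= (expR (- delta * s))%:E)%E]
      <= (C1 * expR (- C2 * M))%:E)%E.
Proof.
move=> /andP[dl0 dl2]; set th := delta / 2; set a := th / (1 - th) ^+ 2.
have th01 : 0 < th < 1 by apply/andP; split; rewrite /th; lra.
set g := th - a * (1 - delta); set c := expR (a * (1 + (1 - delta))).
have g0 : 0 < g.
  have /andP[th0 th1] := th01.
  rewrite /g /a subr_gt0 mulrAC ltr_pdivrMr ?exprn_gt0 ?subr_gt0// ltr_pM2l//.
  by rewrite /th; nra.
exists (c / (1 - expR (- g))), g, 1; split.
  by split=> //; rewrite divr_gt0 ?expR_gt0// subr_gt0 -expR0 ltr_expR oppr_lt0.
move=> d T P H yuleH M M1; have M0 : 0 <= M by lra.
have mH i : measurable_fun setT (H i) by exact: measurable_funP.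
rewrite (_ : [set w | _] = slow_growth_after (fun i => H i) delta M); last first.
  by apply/seteqP; split=> w [s [Ms Ys]]; exists s; rewrite ?expRN_mul_le_iff in Ys *.
have dl1 : delta < 1 by lra.
apply: le_trans (measure_sigma_subadditive P (fun j => measurable_birth_path_le mH _ _)
  (measurable_slow_growth_after mH dl1 M0)
  (@slow_growth_after_sub _ _ _ (fun i => H i) delta M dl1)) _.
apply: le_trans _ (eseries_expR_le _ (expR_ge0 _) g0).
apply: lee_nneseries => [j _ _|j _]; first exact: measure_ge0.
by apply: yule_birth_path_le => //; [lra|rewrite addr_ge0].
Qed.
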